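(* Let $w_1,\dots,w_r\in\mathbb{R}^{2n}$ be pairwise distinct points whose real affine span has dimension at least $3$, and let $f(x)=\sum_{i=1}^r\log|x-w_i|^2$ on $\mathbb{R}^{2n}\setminus\{w_1,\dots,w_r\}$. Then at every critical point of $f$ the Hessian of $f$ has positivity index at least $2n-1$.
   Context: $|\cdot|$ is the Euclidean norm. The positivity index of a symmetric bilinear form is the number of positive eigenvalues of its matrix. *)

From HB Require Import structures.
From Stdlib Require Import Reals Classical ClassicalEpsilon FunctionalExtensionality.
From mathcomp Require Import all_boot all_order all_algebra.
Set Implicit Arguments. Unset Strict Implicit. Unset Printing Implicit Defensive.

Definition Req_bool (x y : R) : bool := if Req_EM_T x y then true else false.
Lemma Req_boolP : Equality.axiom Req_bool.
Proof. move=> x y; rewrite /Req_bool; case: Req_EM_T => H; constructor => //. Qed.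
HB.instance Definition _ := hasDecEq.Build R Req_boolP.

Definition R_find (P : pred R) (n : nat) : option R :=
  match excluded_middle_informative (exists x, P x) with
  | left H => Some (proj1_sig (constructive_indefinite_description _ H))
  | right _ => None
  end.
Lemma R_find_correct P n x : R_find P n = Some x -> P x.
Proof.
rewrite /R_find; case: excluded_middle_informative => // H [<-].
exact: proj2_sig (constructive_indefinite_description _ H).
Qed.
Lemma R_find_complete (P : pred R) : (exists x, P x) -> exists n, R_find P n.
Proof. by move=> H; exists 0%N; rewrite /R_find; case: excluded_middle_informative. Qed.
Lemma R_find_ext (P Q : pred R) : P =1 Q -> R_find P =1 R_find Q.
Proof. by move=> /functional_extensionality ->. Qed.
HB.instance Definition _ := hasChoice.Build R R_find_correct R_find_complete R_find_ext.

Lemma R_addA : ssrfun.associative Rplus. Proof. by move=> *; rewrite Rplus_assoc. Qed.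
Lemma R_addC : ssrfun.commutative Rplus. Proof. exact: Rplus_comm. Qed.
Lemma R_add0 : ssrfun.left_id R0 Rplus. Proof. exact: Rplus_0_l. Qed.
Lemma R_addN : ssrfun.left_inverse R0 Ropp Rplus. Proof. exact: Rplus_opp_l. Qed.
HB.instance Definition _ := GRing.isZmodule.Build R R_addA R_addC R_add0 R_addN.

Lemma R_mulA : ssrfun.associative Rmult. Proof. by move=> *; rewrite Rmult_assoc. Qed.
Lemma R_mulC : ssrfun.commutative Rmult. Proof. exact: Rmult_comm. Qed.
Lemma R_mul1 : ssrfun.left_id R1 Rmult. Proof. exact: Rmult_1_l. Qed.
Lemma R_mulDl : ssrfun.left_distributive Rmult Rplus. Proof. exact: Rmult_plus_distr_r. Qed.
Lemma R_one_neq0 : (R1 : R) != R0.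
Proof. by apply/eqP; exact: R1_neq_R0. Qed.
HB.instance Definition _ :=
  GRing.Zmodule_isComNzRing.Build R R_mulA R_mulC R_mul1 R_mulDl R_one_neq0.

Definition R_inv (x : R) : R := if Req_EM_T x 0%R then 0%R else Rinv x.
Lemma R_mulVf (x : R) : x != 0%R -> GRing.mul (R_inv x) x = 1%R.
Proof.
move=> Hx; rewrite /R_inv; case: Req_EM_T => [E|NE].
  by rewrite E eqxx in Hx.
exact: Rinv_l.
Qed.
Lemma R_inv0 : R_inv 0%R = 0%R.
Proof. by rewrite /R_inv; case: Req_EM_T. Qed.
HB.instance Definition _ := GRing.ComNzRing_isField.Build R R_mulVf R_inv0.

Import GRing.Theory.
Local Open Scope ring_scope.

Definition sqnorm (m : nat) (x : 'rV[R]_m) : R := \sum_(k < m) x 0 k * x 0 k.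

Definition logpot (m r : nat) (w : 'I_r -> 'rV[R]_m) (x : 'rV[R]_m) : R :=
  \sum_(i < r) ln (sqnorm (x - w i)).

Definition off_points (m r : nat) (w : 'I_r -> 'rV[R]_m) (x : 'rV[R]_m) : Prop :=
  forall i, x <> w i.

Definition basis_vec (m : nat) (j : 'I_m) : 'rV[R]_m := delta_mx 0 j.

Definition has_partial (m : nat) (g : 'rV[R]_m -> R) (x : 'rV[R]_m) (j : 'I_m) (l : R)
  : Prop := derivable_pt_lim (fun t : R => g (x + t *: basis_vec j)) 0%R l.

Definition critical_point (m : nat) (U : 'rV[R]_m -> Prop) (g : 'rV[R]_m -> R)
  (x : 'rV[R]_m) : Prop :=
  U x /\ forall j, has_partial g x j 0%R.

Definition is_hessian (m : nat) (U : 'rV[R]_m -> Prop) (g : 'rV[R]_m -> R)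
  (x : 'rV[R]_m) (H : 'M[R]_m) : Prop :=
  exists D : 'I_m -> 'rV[R]_m -> R,
    (forall y, U y -> forall i, has_partial g y i (D i y)) /\
    (forall i j, has_partial (D i) x j (H i j)).

(* positivity index: number of positive eigenvalues, counted with (algebraic)
   multiplicity, i.e. sum of multiplicities of positive roots of char_poly *)
Definition positivity_index (m : nat) (H : 'M[R]_m) (k : nat) : Prop :=
  exists s : seq R,
    [/\ uniq s,
        (forall x : R, x \in s <-> Rlt R0 x /\ root (char_poly H) x) &
        k = (\sum_(x <- s) mup x (char_poly H))%N].

(* dimension of the real affine span of the points w_i:
   dimension of the linear span of all differences w_i - w_j *)
Definition affine_span_dim (m r : nat) (w : 'I_r -> 'rV[R]_m) : nat :=
  \rank (\sum_(i < r) \sum_(j < r) <<w i - w j>>)%MS.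

From HB Require Import structures.
From Stdlib Require Import Reals FunctionalExtensionality.
From mathcomp Require Import all_boot all_order all_algebra.
From mathcomp Require Import complex sesquilinear spectral.
From mathcomp Require Import ring.
Set Implicit Arguments. Unset Strict Implicit. Unset Printing Implicit Defensive.
Import GRing.Theory Order.TTheory Num.Theory.
Local Open Scope ring_scope.

(* Off the points w_l, put v_l = x - w_l and c_l = 2 / |v_l|^2.  The Hessian of f is
   H = sum_l (c_l I - c_l^2 v_l^T v_l).  If E has two orthonormal rows and P = E^* E is
   the orthogonal projection onto their span, then
     tr (E H E^* ) = sum_l c_l^2 |v_l - v_l P|^2 >= 0,
   with equality only when every v_l lies in that plane.  Two nonpositive eigenvalues of H
   would give such an E with tr (E H E^* ) <= 0, so all the v_l, hence all the w_i - w_j,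
   would lie in a plane, contradicting dim aff span >= 3.  Hence H has at most one
   nonpositive eigenvalue, at every point off the w_l.
   Eigenvalues are handled through the complexification of H and the spectral theorem
   for Hermitian matrices. *)

(** * The reals as a real closed field *)

Section RealOrder.
Local Open Scope R_scope.

Definition Rleb x y := if Rle_dec x y is left _ then true else false.
Definition Rltb x y := Rleb x y && (x != y).

Lemma RlebP x y : reflect (x <= y) (Rleb x y).
Proof. by rewrite /Rleb; apply: (iffP idP); case: Rle_dec. Qed.

Lemma RltbP x y : reflect (x < y) (Rltb x y).
Proof.
rewrite /Rltb /Rleb; apply: (iffP idP); case: Rle_dec => //=.
- by case=> // -> /eqP.
- by move=> _ xy; apply/eqP/Rlt_not_eq.
- by move=> nxy xy; case: nxy; left.
Qed.

Lemma Rleb_norm_add x y : Rleb (Rabs (x + y)) (Rabs x + Rabs y).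
Proof. exact/RlebP/Rabs_triang. Qed.

Lemma Rltb_add_gt0 x y : Rltb 0 x -> Rltb 0 y -> Rltb 0 (x + y).
Proof. by move=> /RltbP x0 /RltbP y0; apply/RltbP/Rplus_lt_0_compat. Qed.

Lemma Rabs_eq0 x : Rabs x = 0 -> x = 0.
Proof. by move=> H; case: (x == 0) /eqP => // /Rabs_no_R0. Qed.

Lemma Rleb_ge0_total x y : Rleb 0 x -> Rleb 0 y -> Rleb x y || Rleb y x.
Proof.
move=> _ _; case: (Rle_lt_dec x y) => [/RlebP -> // | /Rlt_le/RlebP ->].
by rewrite orbT.
Qed.

Lemma Rleb_def x y : Rleb x y = (Rabs (y - x) == y - x).
Proof.
apply/(sameP (RlebP x y))/(iffP idP) => [/eqP H | /Rle_minus H].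
  apply: Rminus_le; rewrite -Ropp_minus_distr.
  by apply/Rge_le/Ropp_0_le_ge_contravar; rewrite -H; apply: Rabs_pos.
apply/eqP/Rabs_pos_eq; rewrite -Ropp_minus_distr.
exact/Ropp_0_ge_le_contravar/Rle_ge.
Qed.

Lemma Rltb_def x y : Rltb x y = (y != x) && Rleb x y.
Proof.
apply/(sameP (RltbP x y))/(iffP idP) => [/andP[/eqP yx /RlebP /Rle_not_gt xy] | xy].
  by case: (Rtotal_order x y) => // [][] // /esym.
by apply/andP; split; [apply/eqP/Rgt_not_eq | apply/RlebP/Rlt_le].
Qed.

End RealOrder.

HB.instance Definition _ := Num.IntegralDomain_isNumRing.Build R
  Rleb_norm_add Rltb_add_gt0 Rabs_eq0 Rleb_ge0_total Rabs_mult Rleb_def Rltb_def.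

Lemma RleP x y : reflect (Rle x y) (x <= y)%R. Proof. exact: RlebP. Qed.
Lemma RltP x y : reflect (Rlt x y) (x < y)%R. Proof. exact: RltbP. Qed.

Lemma R_le_total : total (<=%O : rel R).
Proof.
move=> x y; case: (Rle_lt_dec x y) => [/RleP -> // | /Rlt_le/RleP ->].
by rewrite orbT.
Qed.
HB.instance Definition _ := Order.POrder_isTotal.Build _ R R_le_total.

Lemma continuity_horner (p : {poly R}) : continuity (fun x => p.[x]).
Proof.
elim/poly_ind: p => [|p c IH].
  rewrite (functional_extensionality _ (fun _ => 0) (fun x => horner0 x)).
  exact: continuity_const.
rewrite (functional_extensionality _ (fun x => Rplus (Rmult p.[x] x) c)
  (fun x => hornerMXaddC p c x)).
apply: continuity_plus; last exact: continuity_const.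
exact: continuity_mult IH (derivable_continuous _ derivable_id).
Qed.

Lemma R_real_closed : Num.real_closed_axiom R.
Proof.
move=> p a b ab /andP[pa pb].
have [pa0|pa0] := eqVneq p.[a] 0; first by exists a; rewrite ?lexx ?ab /root ?pa0.
have [pb0|pb0] := eqVneq p.[b] 0; first by exists b; rewrite ?lexx ?ab /root ?pb0.
have {}pa : p.[a] < 0 by rewrite lt_neqAle pa0.
have {}pb : 0 < p.[b] by rewrite lt_neqAle eq_sym pb0.
have {}ab : a < b.
  by rewrite lt_neqAle ab andbT; apply: contraTneq pa => ->; rewrite -leNgt ltW.
have [z [[az zb] /eqP pz]] := IVT _ a b (continuity_horner p)
  (RltP _ _ ab) (RltP _ _ pa) (RltP _ _ pb).
by exists z => //; apply/andP; split; apply/RleP.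
Qed.
HB.instance Definition _ := Num.RealField_isClosed.Build R R_real_closed.

(** * Derivatives of real functions *)

(* Stdlib binds [R_scope] to [R]; rebind it so that arguments of type [R] are read
   with ring notations from here on. *)
Local Bind Scope ring_scope with R.

Definition has_deriv (f : R -> R) (x l : R) : Prop := derivable_pt_lim f x l.

Lemma RinvE (x : R) : x^-1 = Rinv x.
Proof. by rewrite /GRing.inv /= /R_inv; case: Req_EM_T => E //=; rewrite E Rinv_0. Qed.

Lemma RmultE (x y : R) : Rmult x y = x * y. Proof. by []. Qed.
Lemma RminusE (x y : R) : Rminus x y = x - y. Proof. by []. Qed.

Lemma has_deriv_eq f g x l l' : has_deriv f x l -> f =1 g -> l = l' -> has_deriv g x l'.
Proof. by move=> df /functional_extensionality <- <-. Qed.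

Lemma has_deriv_cst (c x : R) : has_deriv (fun _ => c) x 0.
Proof. exact: derivable_pt_lim_const. Qed.

Lemma has_deriv_id x : has_deriv (fun t => t) x 1.
Proof. exact: derivable_pt_lim_id. Qed.

Lemma has_deriv_add f g a b x : has_deriv f x a -> has_deriv g x b ->
  has_deriv (fun t => f t + g t) x (a + b).
Proof. exact: derivable_pt_lim_plus. Qed.

Lemma has_deriv_mul f g a b x : has_deriv f x a -> has_deriv g x b ->
  has_deriv (fun t => f t * g t) x (a * g x + f x * b).
Proof. exact: derivable_pt_lim_mult. Qed.

Lemma has_deriv_scale (c : R) f a x :
  has_deriv f x a -> has_deriv (fun t => c * f t) x (c * a).
Proof. by move=> df; apply: has_deriv_eq (derivable_pt_lim_scal _ c _ _ df) _ _. Qed.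

Lemma has_deriv_inv f a x : f x != 0 -> has_deriv f x a ->
  has_deriv (fun t => (f t)^-1) x (- a / f x ^+ 2).
Proof.
move=> /eqP fx0 df.
apply: has_deriv_eq (derivable_pt_lim_div _ _ _ _ _ (has_deriv_cst 1 x) df fx0) _ _.
  by move=> t; rewrite /div_fct /Rdiv -RinvE RmultE mul1r.
by rewrite /Rdiv /Rsqr -RinvE !RmultE RminusE mul0r sub0r mulr1.
Qed.

Lemma has_deriv_ln f a x : 0 < f x -> has_deriv f x a ->
  has_deriv (fun t => ln (f t)) x (a / f x).
Proof.
move=> /RltP fx0 df.
apply: has_deriv_eq (derivable_pt_lim_comp _ _ _ _ _ df (derivable_pt_lim_ln _ fx0)) _ _ => //.
by rewrite RmultE -RinvE mulrC.
Qed.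

Lemma has_deriv_sum (I : finType) (F : I -> R -> R) (dF : I -> R) x :
  (forall i, has_deriv (F i) x (dF i)) ->
  has_deriv (fun t => \sum_i F i t) x (\sum_i dF i).
Proof.
move=> dFi; rewrite unlock /reducebig.
elim: (index_enum I) => [|i s IH] /=; first exact: has_deriv_cst.
exact: has_deriv_add.
Qed.

Lemma has_deriv_near f g x l (d : R) : 0 < d ->
  (forall t, `|t - x| < d -> f t = g t) -> has_deriv f x l -> has_deriv g x l.
Proof.
move=> d0 fg df eps eps0.
have [del Hdel] := df eps eps0.
have m0 : Rlt 0 (Rmin del d) by apply: Rmin_pos; [apply: cond_pos | exact/RltP].
exists (mkposreal _ m0) => h h0 /= hlt.
have hdel : Rlt (Rabs h) del by apply: Rlt_le_trans hlt (Rmin_l _ _).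
have hd : `|h| < d by apply/RltP/(Rlt_le_trans _ _ _ hlt (Rmin_r _ _)).
rewrite -!fg ?subrr ?normr0 //; first exact: Hdel.
by rewrite addrC addKr.
Qed.

(** * Gradient and Hessian of the logarithmic potential *)

Lemma sum_delta m (j : 'I_m) (F : 'I_m -> R) : \sum_k (j == k)%:R * F k = F j.
Proof.
rewrite (bigD1 j) //= eqxx mul1r big1 ?addr0 // => k.
by rewrite eq_sym => /negPf ->; rewrite mul0r.
Qed.

Lemma basis_shiftE m (z : 'rV[R]_m) j t k :
  (z + t *: basis_vec j) 0 k = z 0 k + t * (j == k)%:R.
Proof. by rewrite !mxE /= eq_sym. Qed.

Lemma sqnorm_shift m (z : 'rV[R]_m) j t :
  sqnorm (z + t *: basis_vec j) = sqnorm z + 2 * z 0 j * t + t * t.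
Proof.
transitivity (\sum_k (z 0 k * z 0 k + (j == k)%:R * (2 * z 0 k * t + t * t))).
  by apply: eq_bigr => k _; rewrite basis_shiftE; case: (j == k) => /=; ring.
by rewrite big_split /= sum_delta addrA.
Qed.

Lemma has_deriv_entry_shift m (z : 'rV[R]_m) i j :
  has_deriv (fun t => (z + t *: basis_vec j) 0 i) 0 (j == i)%:R.
Proof.
apply: has_deriv_eq (has_deriv_add (has_deriv_cst (z 0 i) 0)
  (has_deriv_mul (has_deriv_id 0) (has_deriv_cst (j == i)%:R 0))) _ _.
  by move=> t; rewrite basis_shiftE.
by rewrite mul1r mulr0 add0r addr0.
Qed.

Lemma has_deriv_sqnorm_shift m (z : 'rV[R]_m) j :
  has_deriv (fun t => sqnorm (z + t *: basis_vec j)) 0 (2 * z 0 j).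
Proof.
have did := has_deriv_id 0.
apply: has_deriv_eq (has_deriv_add (has_deriv_add (has_deriv_cst (sqnorm z) 0)
  (has_deriv_scale (2 * z 0 j) did)) (has_deriv_mul did did)) _ _.
  by move=> t; rewrite sqnorm_shift.
by rewrite /id; ring.
Qed.

Lemma sqnorm_gt0 m (z : 'rV[R]_m) : z != 0 -> 0 < sqnorm z.
Proof.
move=> z0; have [k zk] : exists k, z 0 k != 0.
  apply/existsP; apply: contraNT z0; rewrite negb_exists => /forallP zk.
  by apply/eqP/rowP => k; rewrite mxE; apply/eqP; rewrite -[_ == _]negbK zk.
rewrite /sqnorm (bigD1 k) //= ltr_wpDr ?sumr_ge0 // => [i _|].
  by rewrite -expr2 sqr_ge0.
by rewrite -expr2 exprn_even_gt0.
Qed.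

Lemma off_points_sqnorm_gt0 m r (w : 'I_r -> 'rV[R]_m) y l :
  off_points w y -> 0 < sqnorm (y - w l).
Proof. by move=> off; apply: sqnorm_gt0; rewrite subr_eq0; apply/eqP; apply: off. Qed.

Lemma off_points_near m r (w : 'I_r -> 'rV[R]_m) x j : off_points w x ->
  exists2 d : R, 0 < d & forall t, `|t - 0| < d -> off_points w (x + t *: basis_vec j).
Proof.
move=> off; pose d := \big[Order.min/1]_l sqnorm (x - w l).
have d0 : 0 < d.
  by elim/big_ind: d => // [a b a0 b0|l _]; rewrite ?lt_min ?a0 ?b0 ?off_points_sqnorm_gt0.
exists d => // t; rewrite subr0 => td l xt.
have t1 : `|t| <= 1 by apply/ltW/(lt_le_trans td)/bigmin_le_id.
have xwE : x - w l = 0 + (- t) *: basis_vec j.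
  by rewrite -xt scaleNr add0r opprD addrA subrr add0r.
have sqE : sqnorm (x - w l) = `|t| ^+ 2.
  rewrite xwE sqnorm_shift mxE mulr0 mul0r addr0 mulrNN -expr2 -real_normK ?num_real //.
  by rewrite /sqnorm big1 ?add0r // => k _; rewrite mxE mul0r.
suff : d <= `|t| by rewrite leNgt td.
by apply: le_trans (bigmin_le _ l _) _; rewrite /= sqE expr2 ler_piMr.
Qed.

Definition logpot_grad m r (w : 'I_r -> 'rV[R]_m) (j : 'I_m) (y : 'rV[R]_m) : R :=
  \sum_l 2 * (y - w l) 0 j / sqnorm (y - w l).

(* With [c = 2 / |u|^2] this is the Hessian of [y |-> log |y|^2] at [u]. *)
Definition hess_term (K : comNzRingType) m (c : K) (u : 'rV[K]_m) : 'M[K]_m :=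
  c *: 1%:M - c ^+ 2 *: (u^T *m u).

Definition logpot_hessian m r (w : 'I_r -> 'rV[R]_m) (x : 'rV[R]_m) : 'M[R]_m :=
  \sum_l hess_term (2 / sqnorm (x - w l)) (x - w l).

Lemma hess_termE (K : comNzRingType) m (c : K) (u : 'rV[K]_m) i j :
  hess_term c u i j = c * (i == j)%:R - c ^+ 2 * (u 0 i * u 0 j).
Proof. by rewrite !mxE big_ord1 !mxE mulr_natr. Qed.

Lemma has_partial_logpot m r (w : 'I_r -> 'rV[R]_m) y j :
  off_points w y -> has_partial (logpot w) y j (logpot_grad w j y).
Proof.
move=> off; have pos l : 0 < sqnorm (y - w l + 0 *: basis_vec j).
  by rewrite scale0r addr0; exact: off_points_sqnorm_gt0.
apply: (has_deriv_eq (has_deriv_sum (fun l =>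
  has_deriv_ln (pos l) (has_deriv_sqnorm_shift (y - w l) j)))).
  by move=> t; apply: eq_bigr => l _; rewrite addrAC.
by apply: eq_bigr => l _; rewrite scale0r addr0.
Qed.

Lemma has_deriv_logpot_grad m r (w : 'I_r -> 'rV[R]_m) x i j : off_points w x ->
  has_deriv (fun t => logpot_grad w i (x + t *: basis_vec j)) 0 (logpot_hessian w x i j).
Proof.
move=> off; rewrite /logpot_hessian summxE.
apply: (has_deriv_eq (has_deriv_sum (fun l => has_deriv_mul
  (has_deriv_scale 2 (has_deriv_entry_shift (x - w l) i j))
  (has_deriv_inv _ (has_deriv_sqnorm_shift (x - w l) j))))).
- by move=> l; rewrite scale0r addr0 gt_eqF ?off_points_sqnorm_gt0.
- by move=> t; apply: eq_bigr => l _; rewrite addrAC.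
- apply: eq_bigr => l _; have := off_points_sqnorm_gt0 l off.
  by rewrite hess_termE !scale0r !addr0 eq_sym => /lt0r_neq0 nz; field.
Qed.

Lemma is_hessian_logpot m r (w : 'I_r -> 'rV[R]_m) x H :
  off_points w x -> is_hessian (off_points w) (logpot w) x H -> H = logpot_hessian w x.
Proof.
move=> off [D [dlogpot dD]]; apply/matrixP => i j.
have [d d0 near_off] := off_points_near j off.
apply: uniqueness_limite (dD i j) _.
apply: (has_deriv_near d0 _ (has_deriv_logpot_grad i j off)) => t /near_off offt.
exact: uniqueness_limite (has_partial_logpot i offt) (dlogpot _ offt i).
Qed.

(** * Compressing the Hessian to a plane *)

Local Open Scope sesquilinear_scope.

Section HermitianCompression.
Variable C : numClosedFieldType.

Lemma trmxC_mul m n p (A : 'M[C]_(m, n)) (B : 'M[C]_(n, p)) : (A *m B)^t* = B^t* *m A^t*.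
Proof. by rewrite trmx_mul map_mxM. Qed.

Lemma char_poly_conj m (P B : 'M[C]_m) : P \in unitmx ->
  char_poly (invmx P *m B *m P) = char_poly B.
Proof.
move=> Pu; rewrite /char_poly /char_poly_mx.
set Q := map_mx (@polyC C).
have -> : 'X%:M - Q (invmx P *m B *m P) = Q (invmx P) *m ('X%:M - Q B) *m Q P.
  rewrite mulmxBr mulmxBl /Q !map_mxM scalar_mxC; congr (_ - _).
  by rewrite -mulmxA -map_mxM mulVmx // map_mx1 mulmx1.
by rewrite !det_mulmx mulrC mulrA -det_mulmx -map_mxM mulmxV // map_mx1 det1 mul1r.
Qed.

Lemma mulmx_tC_entry m n p (X : 'M[C]_(m, p)) (Y : 'M[C]_(n, p)) i j :
  (X *m Y^t*) i j = dotmx (row i X) (row j Y).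
Proof. by rewrite dotmxE !mxE; apply: eq_bigr => k _; rewrite !mxE. Qed.

Lemma hermitian_eigenbasis m (A : 'M[C]_m) : A \is hermsymmx ->
  exists P (d : 'rV[C]_m), [/\ P \is unitarymx,
    char_poly A = \prod_i ('X - (d 0 i)%:P),
    forall i, d 0 i \is Num.real &
    forall i, d 0 i = dotmx (row i P *m A) (row i P)].
Proof.
move=> Aherm; have /orthomx_spectralP Aeq := hermitian_normalmx Aherm.
set P := spectralmx A in Aeq; set d := spectral_diag A in Aeq.
have Pu : P \is unitarymx := spectral_unitarymx A.
exists P, d; split=> // [|i|i].
- rewrite Aeq char_poly_conj ?unitarymx_unit // char_poly_trig ?diag_mx_is_trig //.
  by apply: eq_bigr => i _; rewrite mxE eqxx mulr1n.
- exact: mxOverP (hermitian_spectral_diag_real Aherm) 0 i.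
- have PAP : P *m A *m P^t* = diag_mx d.
    rewrite Aeq invmx_unitary // !mulmxA.
    by rewrite (unitarymxP Pu) mul1mx -mulmxA (unitarymxP Pu) mulmx1.
  have := congr1 (fun M : 'M[C]_m => M i i) PAP.
  by rewrite [RHS]mxE eqxx mulr1n mulmx_tC_entry row_mul => <-.
Qed.

Lemma trace_compress_hess_term m (E : 'M[C]_(2, m)) (c : C) (u : 'rV[C]_m) :
  E *m E^t* = 1%:M -> u^t* = u^T -> c * dotmx u u = 2 ->
  let v := u - u *m (E^t* *m E) in \tr (E *m hess_term c u *m E^t*) = c ^+ 2 * dotmx v v.
Proof.
move=> EE ureal cu v; set P := E^t* *m E.
have vv : dotmx v v = (u *m u^T) 0 0 - (u *m P *m u^T) 0 0.
  rewrite dotmxE /v raddfB /= map_mxB trmxC_mul trmxC_mul trmxCK ureal.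
  rewrite mulmxBl !mulmxBr !mulmxA -[u *m E^t* *m E *m E^t*]mulmxA EE mulmx1.
  by rewrite subrr subr0 !mxE.
have trE : \tr (E *m hess_term c u *m E^t*) = c * 2 - c ^+ 2 * (u *m P *m u^T) 0 0.
  rewrite /hess_term mulmxBr mulmxBl -scalemxAr mulmx1 -scalemxAl EE.
  rewrite -!scalemxAr -!scalemxAl linearB /= !mxtraceZ mxtrace1 !mulmxA.
  by rewrite mxtrace_mulC !mulmxA mxtrace_mulC !mulmxA trace_mx11.
by rewrite trE vv -cu dotmxE ureal; ring.
Qed.

Lemma rows_sub_of_compress_trace_le0 m r (u : 'I_r -> 'rV[C]_m) (c : 'I_r -> C)
    (E : 'M[C]_(2, m)) :
  (forall l, (u l)^t* = (u l)^T) -> (forall l, 0 < c l) ->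
  (forall l, c l * dotmx (u l) (u l) = 2) -> E *m E^t* = 1%:M ->
  \tr (E *m (\sum_l hess_term (c l) (u l)) *m E^t*) <= 0 -> forall l, (u l <= E)%MS.
Proof.
move=> ureal c0 cu EE tr_le0 l.
pose v l := u l - u l *m (E^t* *m E).
have trE : \tr (E *m (\sum_l hess_term (c l) (u l)) *m E^t*) =
    \sum_l c l ^+ 2 * dotmx (v l) (v l).
  rewrite mulmx_sumr mulmx_suml raddf_sum; apply: eq_bigr => k _.
  exact: trace_compress_hess_term.
have ge0 k : true -> 0 <= c k ^+ 2 * dotmx (v k) (v k).
  by move=> _; apply: mulr_ge0; [exact/exprn_ge0/ltW | exact: dnorm_ge0].
have sum0 : \sum_k c k ^+ 2 * dotmx (v k) (v k) = 0.
  by apply/le_anti; rewrite -trE tr_le0 /= trE sumr_ge0.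
have /eqP := psumr_eq0P ge0 sum0 (i := l) isT.
rewrite mulf_eq0 expf_eq0 /= gt_eqF //= dnorm_eq0 subr_eq0 => /eqP ->.
by rewrite mulmxA submxMl.
Qed.

Lemma card_nonpos_eigen_le1 m r (u : 'I_r -> 'rV[C]_m) (c : 'I_r -> C)
    (P : 'M[C]_m) (d : 'rV[C]_m) :
  (forall l, (u l)^t* = (u l)^T) -> (forall l, 0 < c l) ->
  (forall l, c l * dotmx (u l) (u l) = 2) -> (2 < \rank (\matrix_l u l))%N ->
  P \is unitarymx -> (forall i, d 0 i \is Num.real) ->
  (forall i, d 0 i = dotmx (row i P *m \sum_l hess_term (c l) (u l)) (row i P)) ->
  (#|[pred i | ~~ (0 < d 0 i)%R]| <= 1)%N.
Proof.
move=> ureal c0 cu rk /row_unitarymxP Porth dreal dE.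
apply/card_le1_eqP => i j; rewrite !inE => di dj; apply/eqP/contraT => ij.
pose f (a : 'I_2) := if val a == 0%N then i else j.
have fE a b : (f a == f b) = (a == b).
  case: a b => [[|[|a]] ?] [[|[|b]] ?] //; rewrite /f -[RHS]val_eqE /= ?eqxx //;
  by rewrite ?(negPf ij) // eq_sym (negPf ij).
pose E := rowsub f P.
have EE : E *m E^t* = 1%:M.
  apply/matrixP => a b; rewrite mulmx_tC_entry !row_rowsub Porth fE mxE.
  by rewrite -mulr_natr mul1r.
have trE : \tr (E *m (\sum_l hess_term (c l) (u l)) *m E^t*) = d 0 i + d 0 j.
  rewrite /mxtrace big_ord_recr big_ord1 /= !mulmx_tC_entry !row_mul !row_rowsub.
  by rewrite /f /= -!dE.
have sub_E l : (u l <= E)%MS.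
  apply: (rows_sub_of_compress_trace_le0 ureal c0 cu EE); rewrite trE.
  by rewrite -oppr_ge0 opprD addr_ge0 // oppr_ge0 real_leNgt ?real0.
have : (\rank (\matrix_l u l) <= 2)%N.
  apply: leq_trans (rank_leq_row E); apply/mxrankS/row_subP => l.
  by rewrite rowK.
by rewrite leqNgt rk.
Qed.
End HermitianCompression.

(** * Counting positive eigenvalues *)

Lemma mup_map_poly (F K : fieldType) (f : {rmorphism F -> K}) x (p : {poly F}) :
  p != 0 -> mup (f x) (map_poly f p) = mup x p.
Proof.
move=> p0; have fp0 : map_poly f p != 0 by rewrite map_poly_eq0.
have XsubCX n : ('X - (f x)%:P) ^+ n = map_poly f (('X - x%:P) ^+ n).
  by rewrite rmorphXn rmorphB /= map_polyX map_polyC.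
apply/eqP; rewrite eqn_leq; apply/andP; split.
  by rewrite mup_geq // -(dvdp_map f) -XsubCX -mup_geq.
by rewrite mup_geq // XsubCX dvdp_map -mup_geq.
Qed.

Lemma sum_count_mem (T : eqType) (t s : seq T) : uniq t ->
  (\sum_(y <- t) count_mem y s)%N = count (mem t) s.
Proof.
move=> ut; elim: s => [|z s IH] /=; first by rewrite big1.
rewrite big_split /= IH -(count_uniq_mem _ ut); congr (_ + _)%N.
rewrite -sum1_count [RHS]big_mkcond; apply: eq_bigr => i _ /=.
by rewrite eq_sym; case: eqP.
Qed.

Local Notation toC := (real_complex R).

Lemma positivity_index_eigen m (H : 'M[R]_m) (ds : seq R[i]) k :
  map_poly toC (char_poly H) = \prod_(z <- ds) ('X - z%:P) ->
  positivity_index H k -> k = count (fun z => 0 < z) ds.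
Proof.
move=> chH [s [us sP ->]].
have cH0 : char_poly H != 0 := monic_neq0 (char_poly_monic H).
transitivity (\sum_(y <- map toC s) count_mem y ds)%N.
  rewrite big_map; apply: eq_bigr => x _.
  by rewrite -(mup_map_poly toC) // chH mu_prod_XsubC.
rewrite sum_count_mem; last by rewrite (map_inj_uniq (@complexI R)).
apply: eq_in_count => z zds /=.
apply/mapP/idP; first by case=> y /sP [y0 _] ->; rewrite ltcR; apply/RltP.
move=> z0; have /complex_realP [y zE] := gtr0_real z0; rewrite {}zE in zds z0 *.
exists y => //; apply/sP; split; first by apply/RltP; rewrite -ltcR.
by rewrite -(fmorph_root toC) chH root_prod_XsubC.
Qed.

Lemma hess_term_tr (K : comNzRingType) m (c : K) (u : 'rV[K]_m) :
  (hess_term c u)^T = hess_term c u.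
Proof. by rewrite /hess_term raddfB /= !linearZ /= tr_scalar_mx trmx_mul trmxK. Qed.

Lemma map_hess_term (K L : comNzRingType) (f : {rmorphism K -> L}) m (c : K)
    (u : 'rV[K]_m) :
  map_mx f (hess_term c u) = hess_term (f c) (map_mx f u).
Proof. by rewrite map_mxB !map_mxZ map_mx1 map_mxM -map_trmx rmorphXn. Qed.

Lemma positivity_index_hess_sum m r (v : 'I_r -> 'rV[R]_m) (c : 'I_r -> R) k :
  (forall l, 0 < c l) -> (forall l, c l * sqnorm (v l) = 2) ->
  (2 < \rank (\matrix_l v l))%N ->
  positivity_index (\sum_l hess_term (c l) (v l)) k -> (m - 1 <= k)%N.
Proof.
move=> c0 cv rk pk; set H := \sum_l _ in pk.
pose u l := map_mx toC (v l).
have ureal l : (u l)^t* = (u l)^T.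
  by apply/matrixP => i j; rewrite !mxE conj_Creal // complex_real.
have AE : map_mx toC H = \sum_l hess_term (toC (c l)) (u l).
  by rewrite map_mx_sum; apply: eq_bigr => l _; rewrite map_hess_term.
have Aherm : map_mx toC H \is hermsymmx.
  apply: realsym_hermsym.
    apply/is_hermitianmxP; rewrite expr0 scale1r map_mx_id //.
    have HT : H^T = H by rewrite raddf_sum; apply: eq_bigr => l _; exact: hess_term_tr.
    by rewrite map_trmx HT.
  by apply/mxOverP => i j; rewrite mxE complex_real.
have [P [d [Pu chA dreal dE]]] := hermitian_eigenbasis Aherm.
have kE : k = #|[pred i | 0 < d 0 i]|.
  rewrite (positivity_index_eigen _ pk (ds := [seq d 0 i | i <- enum 'I_m])).
    by rewrite count_map cardE enumT /enum_mem size_filter.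
  by rewrite (map_char_poly toC) chA big_map enumT unlock.
have nonpos_le1 : (#|[predC [pred i | (0 < d 0 i)%R]]| <= 1)%N.
  apply: (card_nonpos_eigen_le1 (c := fun l => toC (c l)) ureal _ _ _ Pu dreal).
  - by move=> l; rewrite ltcR.
  - move=> l; rewrite dotmxE ureal /u map_trmx -map_mxM mxE -rmorphM.
    suff -> : (v l *m (v l)^T) 0 0 = sqnorm (v l) by rewrite cv rmorph_nat.
    by rewrite !mxE; apply: eq_bigr => j _; rewrite !mxE.
  - suff -> : \matrix_l u l = map_mx toC (\matrix_l v l) by rewrite mxrank_map.
    by apply/matrixP => l j; rewrite !mxE.
  - by move=> i; rewrite dE AE.
have := cardC [pred i | 0 < d 0 i]; rewrite card_ord -kE.
by move=> <-; rewrite leq_subLR addnC leq_add2r.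
Qed.

Lemma affine_span_dim_le_rank m r (w : 'I_r -> 'rV[R]_m) (x : 'rV[R]_m) :
  (affine_span_dim w <= \rank (\matrix_l (x - w l)))%N.
Proof.
apply/mxrankS/sumsmx_subP => i _; apply/sumsmx_subP => j _; rewrite genmxE.
have -> : w i - w j = row j (\matrix_l (x - w l)) - row i (\matrix_l (x - w l)).
  by rewrite !rowK opprB [RHS]addrC addrA subrK.
by rewrite addmx_sub ?eqmx_opp ?row_sub.
Qed.

Theorem proposition2p4 (n r : nat) (w : 'I_r -> 'rV[R]_(2 * n))
  (w_inj : injective w) (w_dim : (3 <= affine_span_dim w)%N)
  (x : 'rV[R]_(2 * n)) (H : 'M[R]_(2 * n)) (k : nat) :
  critical_point (off_points w) (logpot w) x ->
  is_hessian (off_points w) (logpot w) x H ->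
  positivity_index H k ->
  (2 * n - 1 <= k)%N.
Proof.
move=> [off _] /(is_hessian_logpot off) -> pk.
apply: (positivity_index_hess_sum _ _ _ pk).
- by move=> l; rewrite divr_gt0 ?off_points_sqnorm_gt0.
- by move=> l; rewrite divfK // gt_eqF ?off_points_sqnorm_gt0.
- exact: leq_trans w_dim (affine_span_dim_le_rank w x).
Qed.
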